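(* Let $\Gamma$ be a gain operator on $\ell^\infty_+(\mathcal I)$ and suppose that for some $\rho\in\mathcal K_\infty$: (i) the set $\Psi(\Gamma_\rho)$ is cofinal; (ii) $\Gamma_\rho$ satisfies the uniform NJI condition; (iii) there is $M>0$ with $|\mathcal I_i|\le M$ for all $i\in\mathcal I$. Then there exists $\rho'\in\mathcal K_\infty$ such that $\Sigma(\Gamma_{\rho'})$ is GATT.
   Context: Let $\mathcal I$ be a nonempty countable index set; $\ell^\infty_+(\mathcal I)$ is the cone of nonnegative real families $s=(s_i)_{i\in\mathcal I}$ with $\|s\|:=\sup_i|s_i|<\infty$, ordered componentwise. $\mathcal K_\infty$: continuous strictly increasing unbounded $\gamma:\mathbb R_+\to\mathbb R_+$ with $\gamma(0)=0$; such functions act on $\ell^\infty_+(\mathcal I)$ componentwise. For $\mathcal J\subset\mathcal I$, $s_{|\mathcal J}$ agrees with $s$ on $\mathcal J$ and is $0$ elsewhere. Gain operator: for each $i$ a finite (possibly empty) $\mathcal I_i\subset\mathcal I\setminus\{i\}$; directed graph $\mathcal G$ with vertices $\mathcal I$ and edges $ji$, $j\in\mathcal I_i$; a pointwise equicontinuous family $\gamma_{ij}\in\mathcal K_\infty$ ($ji\in E(\mathcal G)$); functions $\mu_i:\ell^\infty_+(\mathcal I)\to[0,\infty]$ with (M1) some $\xi\in\mathcal K_\infty$ has $\mu_i(0)=0$, $\mu_i(s)\ge\xi(\|s\|)$; (M2) $\mu_i$ monotone; (M3) for each finite $\mathcal J$, $\mu_i$ restricted to vectors vanishing off $\mathcal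 J$ is finite-valued and continuous; (M4) for each norm-bounded $A$ and $\varepsilon>0$ there is $\delta>0$ with $\sup_i|\mu_i(s_{|\mathcal I_i})-\mu_i(s^0_{|\mathcal I_i})|\le\varepsilon$ whenever $s^0\in A$, $\|s-s^0\|\le\delta$. $\Gamma_i(s):=\mu_i([\gamma_{ij}(s_j)]_{j\in\mathcal I_i})$ (argument zero outside $\mathcal I_i$). For $\rho\in\mathcal K_\infty$, $\Gamma_\rho:=(\mathrm{id}+\rho)\circ\Gamma$. $\mathcal N^-_i(n)$: vertices $j$ with a directed path from $j$ to $i$ of length at most $n$ ($\mathcal N^-_i(0)=\{i\}$). For a monotone $T$, $\Psi(T):=\{s:T(s)\le s\}$; $\Sigma(T)$ is the system $s^{n+1}=T(s^n)$, GATT if $\|T^n(s)\|\to0$ for all $s$. A set $A$ is cofinal if every $s\in\ell^\infty_+(\mathcal I)$ has some $\hat s\in A$ with $s\le\hat s$. $T$ satisfies the uniform NJI condition if for all $r,\varepsilon>0$ there are $n\in\mathbb N$, $\delta>0$ such that for all $s\in\ell^\infty_+(\mathcal I)$, $i$ with $s_i\ge\varepsilon$, $\|s\|\le r$ there is $j\in\mathcal N^-_i(n)$ with $s_j\ge\delta$ and $T_j(s)<s_j$. *)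

From Stdlib Require Import Reals Lra List ClassicalEpsilon.
From Coquelicot Require Import Coquelicot.
Open Scope R_scope.
Set Implicit Arguments.

Section Defs.
Variable I : Type.

Definition linf_pos (s : I -> R) : Prop :=
  (forall i, 0 <= s i) /\ exists C, forall i, Rabs (s i) <= C.

(* sup norm ||s|| = sup_i |s_i| (only applied to bounded families) *)
Definition nrm (s : I -> R) : R :=
  real (Lub_Rbar (fun x => exists i, x = Rabs (s i))).

Definition vle (s t : I -> R) : Prop := forall i, s i <= t i.
Definition vsub (s t : I -> R) : I -> R := fun i => s i - t i.
Definition vzero : I -> R := fun _ => 0.

Definition restr (J : list I) (s : I -> R) : I -> R :=
  fun j => if excluded_middle_informative (In j J) then s j else 0.

End Defs.

(* class K_oo, for functions R_+ -> R_+ (represented on R, values off R_+ irrelevant) *)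
Definition Kinf (g : R -> R) : Prop :=
  g 0 = 0 /\
  (forall x y, 0 <= x -> x < y -> g x < g y) /\
  (forall x, 0 <= x -> forall eps, 0 < eps -> exists d, 0 < d /\
     forall y, 0 <= y -> Rabs (y - x) < d -> Rabs (g y - g x) < eps) /\
  (forall M, exists x, 0 <= x /\ M <= g x).

Section Gain.
Variable I : Type.
(* Ii i : the finite set I_i (as a duplicate-free list);
   gam i j : gamma_{ij}, meaningful for j in I_i (edge ji);
   mu i : mu_i : l^oo_+(I) -> [0,oo] *)
Variable Ii : I -> list I.
Variable gam : I -> I -> R -> R.
Variable mu : I -> (I -> R) -> Rbar.

Definition is_gain_operator : Prop :=
  (forall i, NoDup (Ii i) /\ ~ In i (Ii i)) /\
  (forall i j, In j (Ii i) -> Kinf (gam i j)) /\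
  (forall r, 0 <= r -> forall eps, 0 < eps -> exists d, 0 < d /\
     forall i j, In j (Ii i) -> forall r', 0 <= r' -> Rabs (r' - r) < d ->
       Rabs (gam i j r' - gam i j r) < eps) /\
  (exists xi, Kinf xi /\ forall i, mu i (@vzero I) = Finite 0 /\
     forall s, linf_pos s -> Rbar_le (Finite (xi (nrm s))) (mu i s)) /\
  (forall i s t, linf_pos s -> linf_pos t -> vle s t -> Rbar_le (mu i s) (mu i t)) /\
  (forall (J : list I) i,
     let VJ := fun s => linf_pos s /\ forall j, ~ In j J -> s j = 0 in
     (forall s, VJ s -> is_finite (mu i s)) /\
     (forall s, VJ s -> forall eps, 0 < eps -> exists d, 0 < d /\
        forall t, VJ t -> nrm (vsub t s) < d ->
          Rabs (real (mu i t) - real (mu i s)) < eps)) /\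
  (forall (A : (I -> R) -> Prop),
     (forall s, A s -> linf_pos s) -> (exists r, forall s, A s -> nrm s <= r) ->
     forall eps, 0 < eps -> exists d, 0 < d /\
       forall i s0 s, A s0 -> linf_pos s -> nrm (vsub s s0) <= d ->
         Rabs (real (mu i (restr (Ii i) s)) - real (mu i (restr (Ii i) s0))) <= eps).

(* Gamma_i(s) = mu_i([gamma_ij(s_j)]_{j in I_i}); finite by (M3) *)
Definition Gamma (s : I -> R) : I -> R :=
  fun i => real (mu i (restr (Ii i) (fun j => gam i j (s j)))).

Definition Gamma_rho (rho : R -> R) (s : I -> R) : I -> R :=
  fun i => Gamma s i + rho (Gamma s i).

Fixpoint Nminus (i : I) (n : nat) (j : I) : Prop :=
  match n with
  | O => j = i
  | S m => Nminus i m j \/ exists k, Nminus i m k /\ In j (Ii k)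
  end.

Definition uniform_NJI (T : (I -> R) -> I -> R) : Prop :=
  forall r eps, 0 < r -> 0 < eps -> exists (n : nat) (d : R), 0 < d /\
    forall s i, linf_pos s -> eps <= s i -> nrm s <= r ->
      exists j, Nminus i n j /\ d <= s j /\ T s j < s j.

End Gain.

Definition Psi (I : Type) (T : (I -> R) -> I -> R) (s : I -> R) : Prop :=
  linf_pos s /\ vle (T s) s.

Definition cofinal (I : Type) (A : (I -> R) -> Prop) : Prop :=
  forall s, linf_pos s -> exists sh, A sh /\ vle s sh.

Definition GATT (I : Type) (T : (I -> R) -> I -> R) : Prop :=
  forall s, linf_pos s -> forall eps, 0 < eps -> exists N : nat,
    forall n, (N <= n)%nat -> forall i, Rabs (Nat.iter n T s i) <= eps.

(* Halving the perturbation turns the strict decrease provided by the uniform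
   NJI condition into a decrease by a fixed margin c > 0: at a vertex j with
   s_j >= d and Γ_ρ(s)_j < s_j, the operator Γ_{ρ/2} lowers s_j by at least
   min(ρ(d/2)/2, d/4).  Dominate the initial state by a point of Ψ(Γ_ρ); its
   orbit under Γ_{ρ/2} is nonincreasing and dominates the given orbit.  While
   a coordinate i stays above ε, the sum of the orbit over the (at most
   (M+1)^n) vertices of N^-_i(n) drops by c at every step, which is possible
   only for boundedly many steps. *)

From Stdlib Require Import Reals List Lra Lia ClassicalEpsilon.
From Coquelicot Require Import Coquelicot.
Open Scope R_scope.

Definition nonneg {I : Type} (s : I -> R) : Prop := forall i, 0 <= s i.

Lemma INR_unbounded_mult (a c : R) : 0 < c ->
  exists N : nat, forall n, (N <= n)%nat -> a < INR n * c.
Proof.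
  intros Hc. destruct (INR_unbounded (a / c)) as [N HN].
  exists N; intros n Hn.
  apply le_INR in Hn.
  apply Rlt_le_trans with (INR N * c); [|apply Rmult_le_compat_r; lra].
  apply (Rmult_lt_compat_r c) in HN; auto.
  unfold Rdiv in HN; rewrite Rmult_assoc, Rinv_l, Rmult_1_r in HN; lra.
Qed.

Lemma nat_bound_of_INR_bound {I : Type} (f : I -> nat) (M : R) :
  (forall i, INR (f i) <= M) -> exists Mn : nat, forall i, (f i <= Mn)%nat.
Proof.
  intros Hf. destruct (INR_unbounded M) as [Mn HMn].
  exists Mn; intros i. apply Nat.lt_le_incl, INR_lt. specialize (Hf i). lra.
Qed.

Lemma nrm_le {I : Type} (s : I -> R) (C : R) :
  inhabited I -> (forall i, Rabs (s i) <= C) -> nrm s <= C.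
Proof.
  intros [i0] H. unfold nrm.
  set (E := fun x => exists i, x = Rabs (s i)).
  destruct (Lub_Rbar_correct E) as [Hub Hlub].
  assert (Hle : Rbar_le (Lub_Rbar E) C) by (apply Hlub; intros x [i ->]; apply H).
  assert (Hge : Rbar_le (Rabs (s i0)) (Lub_Rbar E)) by (apply Hub; exists i0; auto).
  destruct (Lub_Rbar E); simpl in *; auto; contradiction.
Qed.

Lemma linf_pos_bounded {I : Type} (s t : I -> R) (C : R) :
  nonneg s -> vle s t -> (forall i, Rabs (t i) <= C) ->
  linf_pos s /\ forall i, Rabs (s i) <= C.
Proof.
  intros Hs Hst Ht.
  assert (Hb : forall i, Rabs (s i) <= C).
  { intros i. specialize (Hst i). specialize (Ht i).
    rewrite Rabs_pos_eq by apply Hs. rewrite Rabs_pos_eq in Ht by (specialize (Hs i); lra).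
    lra. }
  repeat split; eauto.
Qed.

Definition lsum {I : Type} (l : list I) (f : I -> R) : R :=
  fold_right (fun j a => f j + a) 0 l.

Lemma lsum_le {I : Type} (l : list I) f g : vle f g -> lsum l f <= lsum l g.
Proof. intros H; induction l as [|a l IH]; simpl; [lra|]. specialize (H a); lra. Qed.

Lemma lsum_le_sub {I : Type} (l : list I) f g j c :
  vle f g -> In j l -> f j <= g j - c -> lsum l f <= lsum l g - c.
Proof.
  intros H Hin Hj. induction l as [|a l IH]; simpl; [destruct Hin|].
  destruct Hin as [<-|Hin].
  - pose proof (lsum_le l f g H); lra.
  - specialize (IH Hin). specialize (H a); lra.
Qed.

Lemma lsum_ge0 {I : Type} (l : list I) f : nonneg f -> 0 <= lsum l f.
Proof. intros H; induction l as [|a l IH]; simpl; [lra|]. specialize (H a); lra. Qed.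

Lemma lsum_ge_term {I : Type} (l : list I) f j : nonneg f -> In j l -> f j <= lsum l f.
Proof.
  intros H Hj. induction l as [|a l IH]; simpl; [destruct Hj|].
  pose proof (lsum_ge0 l f H). specialize (H a).
  destruct Hj as [<-|Hj]; [|specialize (IH Hj)]; lra.
Qed.

Lemma lsum_le_length {I : Type} (l : list I) f C :
  (forall j, f j <= C) -> lsum l f <= INR (length l) * C.
Proof.
  intros H; induction l as [|a l IH]; simpl length; simpl lsum; [simpl; lra|].
  rewrite S_INR. specialize (H a); lra.
Qed.

Lemma linf_pos_restr {I : Type} (l : list I) (f : I -> R) :
  (forall j, In j l -> 0 <= f j) -> linf_pos (restr l f).
Proof.
  intros H. split.
  - intros i; unfold restr; destruct excluded_middle_informative; auto; lra.
  - exists (lsum l (fun j => Rabs (f j))).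
    assert (Habs : nonneg (fun j => Rabs (f j))) by (intros j; apply Rabs_pos).
    intros i; unfold restr; destruct excluded_middle_informative as [Hi|_].
    + apply (lsum_ge_term l _ i Habs Hi).
    + rewrite Rabs_R0. apply lsum_ge0; auto.
Qed.

Lemma linf_pos_vzero {I : Type} : linf_pos (@vzero I).
Proof.
  split; [intros; unfold vzero; lra|].
  exists 0; intros; unfold vzero; rewrite Rabs_R0; lra.
Qed.

Section Kinf.
Variable g : R -> R.
Hypothesis Hg : Kinf g.

Lemma Kinf_le x y : 0 <= x -> x <= y -> g x <= g y.
Proof.
  destruct Hg as [_ [Hm _]]. intros Hx Hxy.
  destruct (Req_dec x y) as [->|Hne]; [lra|]. left; apply Hm; lra.
Qed.

Lemma Kinf_ge0 x : 0 <= x -> 0 <= g x.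
Proof.
  intros Hx. pose proof (Kinf_le 0 x (Rle_refl 0) Hx). destruct Hg as [H0 _]. lra.
Qed.

Lemma Kinf_gt0 x : 0 < x -> 0 < g x.
Proof.
  destruct Hg as (H0 & Hm & _). intros Hx. rewrite <- H0. apply Hm; lra.
Qed.

Lemma Kinf_div a : 0 < a -> Kinf (fun x => g x / a).
Proof.
  destruct Hg as (H0 & Hm & Hc & Hu). intros Ha. repeat split.
  - rewrite H0; unfold Rdiv; ring.
  - intros x y Hx Hxy. apply Rmult_lt_compat_r; [apply Rinv_0_lt_compat|]; auto.
  - intros x Hx eps Heps.
    destruct (Hc x Hx (a * eps) ltac:(nra)) as [d [Hd Hd']].
    exists d; split; auto. intros y Hy Hyx.
    replace (g y / a - g x / a) with ((g y - g x) / a) by (field; lra).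
    rewrite Rabs_div, (Rabs_pos_eq a) by lra.
    apply Rlt_div_l; auto. rewrite Rmult_comm; auto.
  - intros M. destruct (Hu (a * M)) as [x [Hx HM]].
    exists x; split; auto. apply Rle_div_r; auto. rewrite Rmult_comm; auto.
Qed.

Definition half_margin (d : R) : R := Rmin (g (d / 2) / 2) (d / 4).

Lemma half_margin_gt0 d : 0 < d -> 0 < half_margin d.
Proof.
  intros Hd. unfold half_margin. apply Rmin_glb_lt; [|lra].
  pose proof (Kinf_gt0 (d / 2)); lra.
Qed.

(* Either y >= d/2, and halving g frees g(d/2)/2, or y < d/2 <= x/2, and then
   y + g y / 2 lies below the midpoint of y and x. *)
Lemma half_gain_margin y x d : 0 < d -> 0 <= y -> y + g y < x -> d <= x ->
  y + g y / 2 <= x - half_margin d.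
Proof.
  intros Hd Hy Hyx Hdx. unfold half_margin.
  pose proof (Rmin_l (g (d / 2) / 2) (d / 4)).
  pose proof (Rmin_r (g (d / 2) / 2) (d / 4)).
  pose proof (Kinf_ge0 y Hy).
  destruct (Rle_lt_dec (d / 2) y) as [Hdy|Hdy].
  - pose proof (Kinf_le (d / 2) y ltac:(lra) Hdy). lra.
  - lra.
Qed.

End Kinf.

Section GainOperator.
Context {I : Type}.
Variables (Ii : I -> list I) (gam : I -> I -> R -> R) (mu : I -> (I -> R) -> Rbar).
Hypothesis Hgain : is_gain_operator Ii gam mu.

Let Gam := Gamma Ii gam mu.

Lemma Gamma_ge0_mono s t : nonneg s -> vle s t -> nonneg (Gam s) /\ vle (Gam s) (Gam t).
Proof.
  destruct Hgain as (_ & Hgam & _ & [xi [_ Hxi]] & Hmu_mono & Hmu_fin & _).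
  intros Hs Hst.
  assert (Hgt : forall i j, In j (Ii i) -> 0 <= gam i j (s j) <= gam i j (t j)).
  { intros i j Hj. split; [apply (Kinf_ge0 _ (Hgam i j Hj)); auto|].
    apply (Kinf_le _ (Hgam i j Hj)); auto. }
  cut (forall i, 0 <= Gam s i <= Gam t i).
  { intros H; split; intros i; apply H. }
  intros i. unfold Gam, Gamma.
  set (a := restr (Ii i) (fun j => gam i j (s j))).
  set (b := restr (Ii i) (fun j => gam i j (t j))).
  assert (la : linf_pos a) by (apply linf_pos_restr; intros j Hj; apply Hgt; auto).
  assert (lb : linf_pos b).
  { apply linf_pos_restr; intros j Hj. pose proof (Hgt i j Hj); lra. }
  assert (Hza : vle (@vzero I) a).
  { intros j; unfold a, vzero, restr; destruct excluded_middle_informative; [|lra].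
    apply Hgt; auto. }
  assert (Hab : vle a b).
  { intros j; unfold a, b, restr; destruct excluded_middle_informative; [|lra].
    apply Hgt; auto. }
  assert (Hsupp : forall f, forall j, ~ In j (Ii i) -> restr (Ii i) f j = 0).
  { intros f j Hj; unfold restr; destruct excluded_middle_informative; tauto. }
  destruct (Hmu_fin (Ii i) i) as [Hfin _].
  pose proof (Hfin a (conj la (Hsupp _))) as fa.
  pose proof (Hfin b (conj lb (Hsupp _))) as fb.
  pose proof (Hmu_mono i _ _ linf_pos_vzero la Hza) as H0a.
  pose proof (Hmu_mono i _ _ la lb Hab) as Hmab.
  rewrite (proj1 (Hxi i)) in H0a. rewrite <- fa in H0a, Hmab. rewrite <- fb in Hmab.
  simpl in H0a, Hmab. split; auto.
Qed.

Section Perturbation.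
Variable rho : R -> R.
Hypothesis Hrho : Kinf rho.

Let half_rho := fun x => rho x / 2.

Lemma Gamma_rho_ge0 s : nonneg s -> nonneg (Gamma_rho Ii gam mu rho s).
Proof.
  intros Hs i. destruct (Gamma_ge0_mono s s Hs (fun j => Rle_refl _)) as [H _].
  unfold Gamma_rho. specialize (H i). pose proof (Kinf_ge0 rho Hrho _ H). fold Gam; lra.
Qed.

Lemma Gamma_rho_mono s t : nonneg s -> vle s t ->
  vle (Gamma_rho Ii gam mu rho s) (Gamma_rho Ii gam mu rho t).
Proof.
  intros Hs Hst i. destruct (Gamma_ge0_mono s t Hs Hst) as [H0 Hle].
  unfold Gamma_rho. pose proof (Kinf_le rho Hrho _ _ (H0 i) (Hle i)).
  specialize (Hle i). fold Gam; lra.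
Qed.

Lemma Gamma_rho_half_le s : nonneg s ->
  vle (Gamma_rho Ii gam mu half_rho s) (Gamma_rho Ii gam mu rho s).
Proof.
  intros Hs i. destruct (Gamma_ge0_mono s s Hs (fun j => Rle_refl _)) as [H _].
  unfold Gamma_rho, half_rho. fold Gam. pose proof (Kinf_ge0 rho Hrho _ (H i)). lra.
Qed.

Lemma uniform_NJI_half_margin :
  uniform_NJI Ii (Gamma_rho Ii gam mu rho) ->
  forall r eps, 0 < r -> 0 < eps -> exists (n : nat) (c : R), 0 < c /\
    forall s i, linf_pos s -> eps <= s i -> nrm s <= r ->
      exists j, Nminus Ii i n j /\ Gamma_rho Ii gam mu half_rho s j <= s j - c.
Proof.
  intros HNJI r eps Hr Heps.
  destruct (HNJI r eps Hr Heps) as [n [d [Hd HN]]].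
  exists n, (half_margin rho d); split; [apply half_margin_gt0; auto|].
  intros s i Hs Hi Hnrm. destruct (HN s i Hs Hi Hnrm) as [j [Hj [Hdj Hlt]]].
  exists j; split; auto.
  destruct (Gamma_ge0_mono s s (proj1 Hs) (fun j => Rle_refl _)) as [H _].
  apply half_gain_margin; auto.
Qed.

End Perturbation.
End GainOperator.

Section Orbit.
Context {I : Type}.
Variable T : (I -> R) -> I -> R.
Hypothesis T_ge0 : forall s, nonneg s -> nonneg (T s).
Hypothesis T_mono : forall s t, nonneg s -> vle s t -> vle (T s) (T t).

Lemma iter_ge0 s m : nonneg s -> nonneg (Nat.iter m T s).
Proof. intros Hs; induction m as [|m IH]; simpl; auto. Qed.

Lemma iter_mono s t m : nonneg s -> vle s t -> vle (Nat.iter m T s) (Nat.iter m T t).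
Proof.
  intros Hs Hst; induction m as [|m IH]; simpl; auto.
  apply T_mono; auto. apply iter_ge0; auto.
Qed.

Lemma iter_step_le s m : nonneg s -> vle (T s) s ->
  vle (Nat.iter (S m) T s) (Nat.iter m T s).
Proof.
  intros Hs HTs; induction m as [|m IH]; [exact HTs|].
  apply T_mono; auto. apply (iter_ge0 s (S m) Hs).
Qed.

End Orbit.

Lemma nonincreasing_le {I : Type} (x : nat -> I -> R) :
  (forall m, vle (x (S m)) (x m)) -> forall m k, (m <= k)%nat -> vle (x k) (x m).
Proof.
  intros Hx m k Hmk; induction Hmk as [|k _ IH]; intros j; [lra|].
  specialize (IH j); specialize (Hx k j); lra.
Qed.

Lemma lsum_descent {I : Type} (l : list I) (x : nat -> I -> R) (c : R) n :
  (forall m, vle (x (S m)) (x m)) ->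
  (forall m, (m < n)%nat -> exists j, In j l /\ x (S m) j <= x m j - c) ->
  lsum l (x n) <= lsum l (x O) - INR n * c.
Proof.
  intros Hdec Hstep. induction n as [|n IH]; [simpl; lra|].
  destruct (Hstep n (Nat.lt_succ_diag_r n)) as [j [Hj Hjc]].
  pose proof (lsum_le_sub l _ _ j c (Hdec n) Hj Hjc).
  rewrite S_INR. specialize (IH (fun m Hm => Hstep m (Nat.lt_lt_succ_r _ _ Hm))). lra.
Qed.

Section Neighbourhood.
Context {I : Type}.
Variable Ii : I -> list I.

Fixpoint Nminus_list (i : I) (n : nat) : list I :=
  match n with
  | O => i :: nil
  | S n => Nminus_list i n ++ flat_map Ii (Nminus_list i n)
  end.

Lemma Nminus_list_complete i n j : Nminus Ii i n j -> In j (Nminus_list i n).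
Proof.
  revert j; induction n as [|n IH]; simpl; intros j.
  - intros ->; left; auto.
  - intros [H|[k [Hk Hj]]]; apply in_or_app; [left; auto|right].
    apply in_flat_map; eauto.
Qed.

Lemma Nminus_list_length Mn : (forall i, (length (Ii i) <= Mn)%nat) ->
  forall i n, (length (Nminus_list i n) <= (S Mn) ^ n)%nat.
Proof.
  intros HMn i n; induction n as [|n IH]; simpl; [lia|].
  rewrite length_app.
  assert (Hfl : forall l, (length (flat_map Ii l) <= Mn * length l)%nat).
  { induction l as [|a l IHl]; simpl; [lia|].
    rewrite length_app. specialize (HMn a). lia. }
  specialize (Hfl (Nminus_list i n)). nia.
Qed.

Lemma orbit_eventually_small Mn (x : nat -> I -> R) C eps c n0 :
  (forall i, (length (Ii i) <= Mn)%nat) -> 0 < c ->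
  (forall m, nonneg (x m)) -> (forall m, vle (x (S m)) (x m)) -> (forall j, x O j <= C) ->
  (forall m i, eps <= x m i -> exists j, Nminus Ii i n0 j /\ x (S m) j <= x m j - c) ->
  forall n i, INR ((S Mn) ^ n0) * C < INR n * c -> x n i < eps.
Proof.
  intros HMn Hc Hx0 Hdec HC Hstep n i Hn.
  destruct (Rlt_le_dec (x n i) eps) as [Hlt|Hge]; auto. exfalso.
  set (l := Nminus_list i n0).
  assert (Hdescent : lsum l (x n) <= lsum l (x O) - INR n * c).
  { apply lsum_descent; auto. intros m Hm.
    assert (Hmi : eps <= x m i).
    { pose proof (nonincreasing_le x Hdec m n (Nat.lt_le_incl _ _ Hm) i); lra. }
    destruct (Hstep m i Hmi) as [j [Hj Hjc]].
    exists j; split; auto. apply Nminus_list_complete; auto. }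
  pose proof (lsum_ge0 l (x n) (Hx0 n)).
  pose proof (lsum_le_length l (x O) C HC).
  assert (HC0 : 0 <= C) by (specialize (HC i); specialize (Hx0 O i); lra).
  assert (Hl : INR (length l) <= INR ((S Mn) ^ n0)).
  { apply le_INR, Nminus_list_length; auto. }
  pose proof (Rmult_le_compat_r C _ _ HC0 Hl). lra.
Qed.

End Neighbourhood.

Theorem proposition2p20
  (I : Type) (Icount : exists f : I -> nat, forall x y, f x = f y -> x = y)
  (Inonempty : inhabited I)
  (Ii : I -> list I) (gam : I -> I -> R -> R) (mu : I -> (I -> R) -> Rbar)
  (Hgain : is_gain_operator Ii gam mu)
  (rho : R -> R) (Hrho : Kinf rho)
  (Hcof : cofinal (Psi (Gamma_rho Ii gam mu rho)))
  (HNJI : uniform_NJI Ii (Gamma_rho Ii gam mu rho))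
  (Hdeg : exists M, 0 < M /\ forall i, INR (length (Ii i)) <= M) :
  exists rho', Kinf rho' /\ GATT (Gamma_rho Ii gam mu rho').
Proof.
  assert (Hhalf : Kinf (fun x => rho x / 2)) by (apply Kinf_div; auto; lra).
  exists (fun x => rho x / 2); split; auto.
  set (T := Gamma_rho Ii gam mu (fun x => rho x / 2)).
  assert (T_ge0 : forall s, nonneg s -> nonneg (T s))
    by (intros; apply Gamma_rho_ge0; auto).
  assert (T_mono : forall s t, nonneg s -> vle s t -> vle (T s) (T t))
    by (intros; apply Gamma_rho_mono; auto).
  destruct Hdeg as [M [_ HM]].
  destruct (nat_bound_of_INR_bound (fun i => length (Ii i)) M HM) as [Mn HMn].
  intros s Hs eps Heps.
  destruct (Hcof s Hs) as [sh [[[Hsh0 [C HC]] HTsh] Hssh]].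
  set (x := fun m => Nat.iter m T sh).
  assert (Hdec : forall m, vle (x (S m)) (x m)).
  { intros m. apply iter_step_le; auto. intros j.
    pose proof (Gamma_rho_half_le Ii gam mu Hgain rho Hrho sh Hsh0 j).
    specialize (HTsh j). unfold T; lra. }
  assert (Hbound : forall m, linf_pos (x m) /\ forall i, Rabs (x m i) <= C).
  { intros m. apply linf_pos_bounded with sh; [apply iter_ge0; auto| |auto].
    exact (nonincreasing_le x Hdec O m (Nat.le_0_l m)). }
  destruct (uniform_NJI_half_margin Ii gam mu Hgain rho Hrho HNJI (Rmax C 1) eps
              ltac:(pose proof (Rmax_r C 1); lra) Heps) as [n0 [c [Hc Hstep]]].
  destruct (INR_unbounded_mult (INR ((S Mn) ^ n0) * C) c Hc) as [N HN].
  exists N. intros n Hn i.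
  assert (Hsmall : x n i < eps).
  { apply (orbit_eventually_small Ii Mn x C eps c n0); auto.
    - intros m; apply iter_ge0; auto.
    - intros j. pose proof (proj2 (Hbound O) j). pose proof (Rle_abs (x O j)); lra.
    - intros m j Hj. destruct (Hbound m) as [Hlinf Hb]. apply Hstep; auto.
      apply Rle_trans with C; [apply nrm_le|apply Rmax_l]; auto. }
  pose proof (iter_mono T T_ge0 T_mono s sh n (proj1 Hs) Hssh i).
  pose proof (iter_ge0 T T_ge0 s n (proj1 Hs) i).
  rewrite Rabs_pos_eq by lra. unfold x in Hsmall; lra.
Qed.
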